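(* Fix $0\le\alpha\le1$ and a collection $\mathcal X$ of finite sets. If $0<\beta_0\le\beta$ and $D_{\alpha,\beta_0}$ is a metric on $\mathcal X$, then $D_{\alpha,\beta}$ is a metric on $\mathcal X$. That is, the set of $\beta>0$ for which $D_{\alpha,\beta}$ is a metric on $\mathcal X$ is upward closed.
   Context: For finite sets $X,Y$ let $m(X,Y)=\min\{|X\setminus Y|,|Y\setminus X|\}$ and $M(X,Y)=\max\{|X\setminus Y|,|Y\setminus X|\}$. For $0\le\alpha\le1$ and $\beta>0$, $$D_{\alpha,\beta}(X,Y)=\begin{cases}\beta\,\dfrac{\alpha m(X,Y)+(1-\alpha)M(X,Y)}{|X\cap Y|+\beta\big(\alpha m(X,Y)+(1-\alpha)M(X,Y)\big)} & \text{if } X\cup Y\neq\emptyset,\\[2mm] 0 & \text{if } X=Y=\emptyset.\end{cases}$$ *)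

From HB Require Import structures.
From mathcomp Require Import all_boot all_order all_algebra.
From mathcomp Require Import finmap.
Set Implicit Arguments. Unset Strict Implicit. Unset Printing Implicit Defensive.
Import Order.TTheory GRing.Theory Num.Theory.
Local Open Scope fset_scope.
Local Open Scope ring_scope.

Section Dist.
Variables (T : choiceType) (R : realFieldType).

Definition msmall (X Y : {fset T}) : nat := minn #|` X `\` Y| #|` Y `\` X|.
Definition mlarge (X Y : {fset T}) : nat := maxn #|` X `\` Y| #|` Y `\` X|.

Definition Dab (alpha beta : R) (X Y : {fset T}) : R :=
  if X `|` Y == fset0 then 0
  else
    let w := alpha * (msmall X Y)%:R + (1 - alpha) * (mlarge X Y)%:R in
    beta * w / ((#|` X `&` Y|)%:R + beta * w).

Definition is_metric_on (C : {fset T} -> Prop) (d : {fset T} -> {fset T} -> R) : Prop :=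
  (forall x y, C x -> C y -> 0 <= d x y) /\
  (forall x y, C x -> C y -> (d x y = 0 <-> x = y)) /\
  (forall x y, C x -> C y -> d x y = d y x) /\
  (forall x y z, C x -> C y -> C z -> d x z <= d x y + d y z).
End Dist.

(** Writing [λ = β / β0 ≥ 1], the distance [D_{α,β}] is obtained from
    [D_{α,β0}] by the Möbius map [d ↦ λ d / (1 + (λ - 1) d)].  On [[0, ∞)]
    this map vanishes only at [0], is nondecreasing and subadditive, and
    any such function turns a metric into a metric. *)
From HB Require Import structures.
From mathcomp Require Import all_boot all_order all_algebra.
From mathcomp Require Import finmap.
From mathcomp Require Import ring lra.
Import Order.TTheory GRing.Theory Num.Theory.
Local Open Scope ring_scope.

Lemma is_metric_on_comp (T : choiceType) (R : realFieldType)
    (C : {fset T} -> Prop) (d e : {fset T} -> {fset T} -> R) (f : R -> R) :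
  f 0 = 0 -> (forall x, 0 < x -> 0 < f x) ->
  (forall x y, 0 <= x -> x <= y -> f x <= f y) ->
  (forall x y, 0 <= x -> 0 <= y -> f (x + y) <= f x + f y) ->
  (forall X Y, e X Y = f (d X Y)) ->
  is_metric_on C d -> is_metric_on C e.
Proof.
move=> f0 f_gt0 f_mono f_subadd eE [d_ge0 [d_eq0 [d_sym d_tri]]].
have f_ge0 x : 0 <= x -> 0 <= f x.
  by rewrite le_eqVlt => /orP[/eqP<-|/f_gt0/ltW//]; rewrite f0.
split; first by move=> X Y CX CY; rewrite eE; exact/f_ge0/d_ge0.
split.
  move=> X Y CX CY; rewrite eE -d_eq0 //; split=> [fd0|->//].
  have := d_ge0 X Y CX CY; rewrite le_eqVlt => /orP[/eqP<-//|/f_gt0].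
  by rewrite fd0 ltxx.
split; first by move=> X Y CX CY; rewrite !eE d_sym.
move=> X Y Z CX CY CZ; rewrite !eE.
apply: le_trans (f_subadd _ _ (d_ge0 _ _ CX CY) (d_ge0 _ _ CY CZ)).
by apply: f_mono; [exact: d_ge0 | exact: d_tri].
Qed.

Section Rescale.
Variables (R : realFieldType) (lam : R).
Hypothesis lam_ge1 : 1 <= lam.
Implicit Types a b d s t : R.

Definition rescale (d : R) : R := lam * d / (1 + (lam - 1) * d).

Let lam_gt0 : 0 < lam. Proof. exact: lt_le_trans ltr01 lam_ge1. Qed.
Let lam1_ge0 : 0 <= lam - 1. Proof. by rewrite subr_ge0. Qed.

Let den_gt0 {d} : 0 <= d -> 0 < 1 + (lam - 1) * d.
Proof. by move=> d_ge0; rewrite ltr_pwDl // mulr_ge0. Qed.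

Lemma rescale0 : rescale 0 = 0.
Proof. by rewrite /rescale !mulr0 mul0r. Qed.

Lemma rescale_gt0 d : 0 < d -> 0 < rescale d.
Proof.
move=> d_gt0; apply: divr_gt0; first exact: mulr_gt0.
exact/den_gt0/ltW.
Qed.

Lemma ler_rescale s t : 0 <= s -> s <= t -> rescale s <= rescale t.
Proof.
move=> s_ge0 st; have t_ge0 : 0 <= t by apply: le_trans st.
have ds := den_gt0 s_ge0; have dt := den_gt0 t_ge0.
rewrite -subr_ge0.
have -> : rescale t - rescale s
    = lam * (t - s) / ((1 + (lam - 1) * s) * (1 + (lam - 1) * t)).
  by rewrite /rescale; field; rewrite (gt_eqF ds) (gt_eqF dt).
apply: divr_ge0; last exact/ltW/mulr_gt0.
by rewrite mulr_ge0 ?subr_ge0 // ltW.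
Qed.

Lemma rescaleD_le a b : 0 <= a -> 0 <= b ->
  rescale (a + b) <= rescale a + rescale b.
Proof.
move=> a_ge0 b_ge0.
have da := den_gt0 a_ge0; have db := den_gt0 b_ge0.
have dab := den_gt0 (addr_ge0 a_ge0 b_ge0).
rewrite -subr_ge0.
have -> : rescale a + rescale b - rescale (a + b) =
    lam * a * (lam - 1) * b / ((1 + (lam - 1) * a) * (1 + (lam - 1) * (a + b)))
  + lam * b * (lam - 1) * a / ((1 + (lam - 1) * b) * (1 + (lam - 1) * (a + b))).
  by rewrite /rescale; field; rewrite (gt_eqF da) (gt_eqF db) (gt_eqF dab).
by apply: addr_ge0; (apply: divr_ge0; [rewrite !mulr_ge0 // ltW | exact/ltW/mulr_gt0]).
Qed.

End Rescale.
Arguments rescale {R}.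

Lemma rescale_ratio (R : realFieldType) (b0 b c w : R) :
  0 < b0 -> b0 <= b -> 0 <= c -> 0 <= w ->
  b * w / (c + b * w) = rescale (b / b0) (b0 * w / (c + b0 * w)).
Proof.
move=> b0_gt0 b0_le c_ge0 w_ge0.
have [->|w_neq0] := eqVneq w 0; first by rewrite !mulr0 !mul0r rescale0.
have w_gt0 : 0 < w by rewrite lt0r w_neq0.
have d0 : 0 < c + b0 * w by nra.
have d : 0 < c + b * w by nra.
rewrite /rescale.
have -> : 1 + (b / b0 - 1) * (b0 * w / (c + b0 * w)) = (c + b * w) / (c + b0 * w).
  by field; rewrite (gt_eqF b0_gt0) (gt_eqF d0).
by field; rewrite (gt_eqF b0_gt0) (gt_eqF d0) (gt_eqF d).
Qed.

Lemma Dab_rescale (T : choiceType) (R : realFieldType) (alpha beta0 beta : R)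
    (X Y : {fset T}) :
  0 <= alpha -> alpha <= 1 -> 0 < beta0 -> beta0 <= beta ->
  Dab alpha beta X Y = rescale (beta / beta0) (Dab alpha beta0 X Y).
Proof.
move=> alpha_ge0 alpha_le1 beta0_gt0 beta0_le.
rewrite /Dab; case: ifP => _; first by rewrite rescale0.
by apply: rescale_ratio => //; rewrite addr_ge0 // mulr_ge0 // subr_ge0.
Qed.

Theorem mainTheorem6 (T : choiceType) (R : realFieldType) (alpha beta0 beta : R)
  (C : {fset T} -> Prop) :
  0 <= alpha -> alpha <= 1 -> 0 < beta0 -> beta0 <= beta ->
  is_metric_on C (Dab alpha beta0) -> is_metric_on C (Dab alpha beta).
Proof.
move=> alpha_ge0 alpha_le1 beta0_gt0 beta0_le metric0.
have lam_ge1 : 1 <= beta / beta0 by rewrite ler_pdivlMr // mul1r.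
apply: (@is_metric_on_comp _ _ _ _ _ (rescale (beta / beta0))) metric0.
- exact: rescale0.
- exact: rescale_gt0 lam_ge1.
- exact: ler_rescale lam_ge1.
- exact: rescaleD_le lam_ge1.
- by move=> X Y; exact: Dab_rescale.
Qed.
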